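(* Define $\alpha_n(q)$ (written $a_n(q^2)$ in the original) recursively by $\alpha_0(q)=0$ and $\alpha_n(q) = q^n +(1-q^{2n-2})\alpha_{n-1}(q)$ for $n\in\mathbb{N}$. Then for $q\in\mathbb{C}$ with $0<|q|<1$, \[ q^{-1}\lim_{n\to \infty} \alpha_n(q) = \frac{\left(q^2;q^2\right)_\infty}{\left(q;q^2\right)_\infty} = \sum_{n\geq 0} q^{\frac{n(n+1)}{2}} . \]
   Context: For $n\in\mathbb{N}_0\cup\{\infty\}$, $(a;q)_n := \prod_{j=0}^{n-1}(1-aq^j)$. *)

From Stdlib Require Import Reals.
From Coquelicot Require Import Coquelicot.
Open Scope C_scope.

(* alpha_n(q):  alpha_0 = 0,  alpha_n = q^n + (1 - q^(2n-2)) alpha_{n-1}.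
   For n = m+1: 2n-2 = 2m. *)
Fixpoint alpha (q : C) (n : nat) : C :=
  match n with
  | O => 0
  | S m => q ^ (S m) + (1 - q ^ (2 * m)) * alpha q m
  end.

Fixpoint qpoch (a q : C) (n : nat) : C :=
  match n with
  | O => 1
  | S m => qpoch a q m * (1 - a * q ^ m)
  end.

Definition qpoch_inf_is (a q P : C) : Prop :=
  filterlim (qpoch a q) eventually (locally P).

(* Unrolling the recursion gives alpha_(N+1) = q (q^2;q^2)_N sum_(m<=N) q^m / (q^2;q^2)_m, so
   q^-1 lim alpha_n = (q^2;q^2)_oo / (q;q^2)_oo by Euler's identity sum_m z^m / (r;r)_m = 1 / (z;r)_oo.
   For Gauss's identity (q^2;q^2)_oo / (q;q^2)_oo = sum_n q^(n(n+1)/2), expand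
   prod_(m=-n..n) (1 + q^m) = (-q^-n;q)_(2n+1) by Rothe's q-binomial theorem and pair the terms
   symmetric about the middle: this gives (-q;q)_n^2 = sum_(i<=n) q^(i(i+1)/2) [2n+1, n-i]_q.
   Multiplied by (q;q)_n (q;q)_(n+1) / (q;q)_(2n+1), the i-th term becomes q^(i(i+1)/2) times the weight
   (q;q)_n (q;q)_(n+1) / ((q;q)_(n-i) (q;q)_(n+1+i)), which tends to 1 and is bounded uniformly, so
   Tannery's theorem lets n -> oo termwise. *)

From Stdlib Require Import Reals Lra Lia.
From Coquelicot Require Import Coquelicot.
Open Scope C_scope.

Local Notation "u --> l" := (filterlim u eventually (locally (l : C))) (at level 70).

Lemma lim_Cmod_iff (u : nat -> C) (l : C) :
  u --> l <-> forall eps : posreal, eventually (fun n => (Cmod (u n - l) < eps)%R).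
Proof. exact (filterlim_locally_ball_norm (U := C_NormedModule) u l). Qed.

Lemma continuous_Cmult (l m : C) :
  filterlim (fun z : C * C => fst z * snd z) (filter_prod (locally l) (locally m)) (locally (l * m)).
Proof.
  (* Coquelicot proves this for the topology of [C_AbsRing]; it and the one of [C] both come from [Cmod]. *)
  eapply filterlim_filter_le_2; [apply (locally_norm_le_locally (V := C_NormedModule))|].
  eapply filterlim_filter_le_1; [|apply (filterlim_mult (K := C_AbsRing) l m)].
  intros P [Q R HQ HR HP]. exists Q R; auto.
  - exact (locally_le_locally_norm (V := C_NormedModule) l Q HQ).
  - exact (locally_le_locally_norm (V := C_NormedModule) m R HR).
Qed.

Lemma lim_plus (u v : nat -> C) (l m : C) : u --> l -> v --> m -> (fun n => u n + v n) --> l + m.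
Proof. intros Hu Hv. exact (filterlim_comp_2 _ _ Cplus Hu Hv (filterlim_plus (V := C_NormedModule) l m)). Qed.

Lemma lim_mult (u v : nat -> C) (l m : C) : u --> l -> v --> m -> (fun n => u n * v n) --> l * m.
Proof. intros Hu Hv. exact (filterlim_comp_2 _ _ Cmult Hu Hv (continuous_Cmult l m)). Qed.

Lemma lim_minus (u v : nat -> C) (l m : C) : u --> l -> v --> m -> (fun n => u n - v n) --> l - m.
Proof.
  intros Hu Hv. apply lim_plus; [exact Hu|].
  exact (filterlim_comp _ _ _ v Copp _ _ _ Hv (filterlim_opp (V := C_NormedModule) m)).
Qed.

Lemma lim_unique (u : nat -> C) (l m : C) : u --> l -> u --> m -> l = m.
Proof. exact (filterlim_locally_unique (V := C_NormedModule) u l m). Qed.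

Lemma Cmod_sub_sym (a b : C) : Cmod (a - b) = Cmod (b - a).
Proof. replace (a - b) with (- (b - a)) by ring. apply Cmod_opp. Qed.

Lemma lim_inv (u : nat -> C) (l : C) : l <> 0 -> u --> l -> (fun n => / u n) --> / l.
Proof.
  intros Hl0 Hu. apply lim_Cmod_iff. intros eps.
  assert (Hl : (0 < Cmod l)%R) by exact (proj1 (Cmod_gt_0 l) Hl0).
  set (d := Rmin (Cmod l / 2) (eps * Cmod l * Cmod l / 2)).
  assert (Hd : (0 < d)%R).
  { apply Rmin_glb_lt; [lra|]. assert (0 < eps * Cmod l)%R by (apply Rmult_lt_0_compat; [apply cond_pos|lra]).
    apply Rdiv_lt_0_compat; nra. }
  eapply filter_imp; [|exact (proj1 (lim_Cmod_iff u l) Hu (mkposreal d Hd))]. intros n Hn; simpl in Hn.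
  assert (Hd1 : (d <= Cmod l / 2)%R) by apply Rmin_l.
  assert (Hd2 : (d <= eps * Cmod l * Cmod l / 2)%R) by apply Rmin_r.
  (* [|u n| >= |l| / 2], so [|1/u n - 1/l| <= 2 |u n - l| / |l|^2] *)
  assert (Hu2 : (Cmod l / 2 <= Cmod (u n))%R).
  { assert (Ht := Cmod_triangle (l - u n) (u n)). replace (l - u n + u n) with l in Ht by ring.
    rewrite Cmod_sub_sym in Ht. lra. }
  assert (Hun : u n <> 0) by (intro E; rewrite E, Cmod_0 in Hu2; lra).
  replace (/ u n - / l) with ((l - u n) / (u n * l)) by (field; auto).
  rewrite Cmod_div, Cmod_mult, Cmod_sub_sym by (apply Cmult_neq_0; auto).
  apply (Rmult_lt_reg_r (Cmod (u n) * Cmod l)); [nra|].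
  unfold Rdiv. rewrite Rmult_assoc, Rinv_l, Rmult_1_r by nra.
  assert (0 <= eps * Cmod l * (Cmod (u n) - Cmod l / 2))%R
    by (apply Rmult_le_pos; [apply Rmult_le_pos; [apply Rlt_le, cond_pos|lra]|lra]).
  nra.
Qed.

Lemma lim_reindex (u : nat -> C) (l : C) (phi : nat -> nat) (k : nat) :
  (forall n, (n <= phi n + k)%nat) -> u --> l -> (fun n => u (phi n)) --> l.
Proof.
  intros Hphi Hu. apply (filterlim_comp _ _ _ phi u _ eventually); [|exact Hu].
  intros P [N HN]. exists (N + k)%nat. intros n Hn. apply HN. specialize (Hphi n). lia.
Qed.

Lemma lim_of_lim_S (u : nat -> C) (l : C) : (fun n => u (S n)) --> l -> u --> l.
Proof. intros Hu P HP. destruct (Hu P HP) as [N HN]. exists (S N). intros [|n] Hn; [lia|]. apply HN. lia. Qed.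

Lemma lim_Cmod_le (u : nat -> C) (l a : C) (b : R) :
  u --> l -> (forall n, (Cmod (u n - a) <= b)%R) -> (Cmod (l - a) <= b)%R.
Proof.
  intros Hu Hb. apply Rnot_lt_le. intro Hlt.
  destruct (proj1 (lim_Cmod_iff u l) Hu (mkposreal _ (proj2 (Rlt_0_minus _ _) Hlt))) as [N HN].
  specialize (HN N (le_n _)); simpl in HN. specialize (Hb N).
  assert (Ht := Cmod_triangle (l - u N) (u N - a)). replace (l - u N + (u N - a)) with (l - a) in Ht by ring.
  rewrite (Cmod_sub_sym l (u N)) in Ht. lra.
Qed.

Lemma lim_Cmod_ge (u : nat -> C) (l : C) (c : R) :
  u --> l -> (forall n, (c <= Cmod (u n))%R) -> (c <= Cmod l)%R.
Proof.
  intros Hu Hc. apply Rnot_lt_le. intro Hlt.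
  destruct (proj1 (lim_Cmod_iff u l) Hu (mkposreal _ (proj2 (Rlt_0_minus _ _) Hlt))) as [N HN].
  specialize (HN N (le_n _)); simpl in HN. specialize (Hc N).
  assert (Ht := Cmod_triangle (u N - l) l). replace (u N - l + l) with (u N) in Ht by ring. lra.
Qed.

Lemma lim_geometric (u : nat -> C) (l : C) (K x : R) :
  (0 <= x < 1)%R -> (forall n, (Cmod (u n - l) <= K * x ^ n)%R) -> u --> l.
Proof.
  intros Hx Hb. apply lim_Cmod_iff. intros eps.
  assert (HK : (0 <= K)%R) by (specialize (Hb 0%nat); simpl in Hb; assert (H := Cmod_ge_0 (u 0%nat - l)); lra).
  destruct (pow_lt_1_zero x ltac:(rewrite Rabs_pos_eq; lra) (eps / (K + 1))%R) as [N HN].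
  { apply Rdiv_lt_0_compat; [apply cond_pos|lra]. }
  exists N. intros n Hn. specialize (HN n Hn). rewrite Rabs_pos_eq in HN by (apply pow_le; lra).
  apply Rle_lt_trans with (K * x ^ n)%R; [apply Hb|].
  apply Rle_lt_trans with ((K + 1) * x ^ n)%R; [assert (0 <= x ^ n)%R by (apply pow_le; lra); nra|].
  apply (Rmult_lt_compat_l (K + 1)) in HN; [|lra].
  replace ((K + 1) * (eps / (K + 1)))%R with (pos eps) in HN by (field; lra). exact HN.
Qed.

Lemma sum_n_telescope (u : nat -> C) (n : nat) : sum_n (fun k => u (S k) - u k) n = u (S n) - u 0%nat.
Proof. induction n; [apply sum_O|]. rewrite sum_Sn, IHn. change plus with Cplus; simpl. ring. Qed.

Lemma lim_of_geometric_increments (u : nat -> C) (K x : R) :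
  (0 <= x < 1)%R -> (forall n, (Cmod (u (S n) - u n) <= K * x ^ n)%R) -> exists l, u --> l.
Proof.
  intros Hx Hb.
  destruct (ex_series_le (V := C_CompleteNormedModule) (fun k => u (S k) - u k) (fun k => K * x ^ k)%R)
    as [D HD].
  - exact Hb.
  - apply (ex_series_scal_l (V := R_NormedModule)). exists (/ (1 - x))%R.
    apply is_series_geom. rewrite Rabs_pos_eq; lra.
  - exists (u 0%nat + D). apply lim_of_lim_S.
    apply filterlim_ext with (fun n => u 0%nat + sum_n (fun k => u (S k) - u k) n).
    { intros n. rewrite sum_n_telescope. ring. }
    apply lim_plus; [apply filterlim_const|exact HD].
Qed.

Fixpoint csum (f : nat -> C) (n : nat) : C :=
  match n with O => 0 | S m => csum f m + f m end.

Lemma csum_ext (f g : nat -> C) (n : nat) : (forall i, (i < n)%nat -> f i = g i) -> csum f n = csum g n.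
Proof.
  induction n as [|n IHn]; intros H; simpl; [easy|].
  rewrite IHn, H; [easy|lia|intros i Hi; apply H; lia].
Qed.

Lemma csum_plus (f g : nat -> C) (n : nat) : csum (fun i => f i + g i) n = csum f n + csum g n.
Proof. induction n as [|n IHn]; simpl; [ring|]. rewrite IHn. ring. Qed.

Lemma csum_minus (f g : nat -> C) (n : nat) : csum (fun i => f i - g i) n = csum f n - csum g n.
Proof. induction n as [|n IHn]; simpl; [ring|]. rewrite IHn. ring. Qed.

Lemma csum_scal (c : C) (f : nat -> C) (n : nat) : csum (fun i => c * f i) n = c * csum f n.
Proof. induction n as [|n IHn]; simpl; [ring|]. rewrite IHn. ring. Qed.

Lemma csum_add (f : nat -> C) (a b : nat) : csum f (a + b) = csum f a + csum (fun i => f (a + i)%nat) b.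
Proof.
  induction b as [|b IHb]; simpl; [rewrite Nat.add_0_r; ring|].
  rewrite Nat.add_succ_r. simpl. rewrite IHb. ring.
Qed.

Lemma csum_shift (f : nat -> C) (n : nat) : csum f (S n) = f 0%nat + csum (fun i => f (S i)) n.
Proof.
  induction n as [|n IHn]; [simpl; ring|].
  change (csum f (S (S n))) with (csum f (S n) + f (S n)). rewrite IHn. simpl. ring.
Qed.

Lemma csum_rev (f : nat -> C) (n : nat) : csum f n = csum (fun i => f (n - 1 - i)%nat) n.
Proof.
  induction n as [|n IHn]; [easy|].
  change (csum f (S n)) with (csum f n + f n). rewrite IHn, (csum_shift _ n).
  replace (S n - 1 - 0)%nat with n by lia.
  rewrite (csum_ext (fun i => f (n - 1 - i)%nat) (fun i => f (S n - 1 - S i)%nat)); [ring|].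
  intros i _. f_equal. lia.
Qed.

Lemma sum_n_csum (f : nat -> C) (n : nat) : sum_n f n = csum f (S n).
Proof. induction n as [|n IHn]; [rewrite sum_O; simpl; ring|]. rewrite sum_Sn, IHn. reflexivity. Qed.

Lemma Cmod_csum_le_geometric (f : nat -> C) (n a : nat) (K x : R) : (0 <= K)%R -> (0 <= x < 1)%R ->
  (forall i, (i < n)%nat -> (Cmod (f i) <= K * x ^ (a + i))%R) ->
  (Cmod (csum f n) <= K * x ^ a / (1 - x))%R.
Proof.
  intros HK Hx H.
  assert (Hpart : (Cmod (csum f n) <= K * x ^ a * (1 - x ^ n) / (1 - x))%R).
  { induction n as [|n IHn]; simpl csum.
    - rewrite Cmod_0. replace (K * x ^ a * (1 - x ^ 0) / (1 - x))%R with 0%R by (simpl; field; lra). lra.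
    - eapply Rle_trans; [apply Cmod_triangle|].
      assert (Hn := H n ltac:(lia)). rewrite pow_add in Hn.
      assert (IH := IHn (fun i Hi => H i ltac:(lia))).
      replace (K * x ^ a * (1 - x ^ S n) / (1 - x))%R
        with (K * x ^ a * (1 - x ^ n) / (1 - x) + K * (x ^ a * x ^ n))%R by (simpl; field; lra).
      lra. }
  eapply Rle_trans; [exact Hpart|]. unfold Rdiv. apply Rmult_le_compat_r; [apply Rlt_le, Rinv_0_lt_compat; lra|].
  assert (0 <= x ^ n)%R by (apply pow_le; lra).
  assert (0 <= K * x ^ a)%R by (apply Rmult_le_pos; [lra|apply pow_le; lra]). nra.
Qed.

Lemma lim_csum (f : nat -> nat -> C) (g : nat -> C) (J : nat) :
  (forall i, (fun n => f n i) --> g i) -> (fun n => csum (f n) J) --> csum g J.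
Proof. intros H. induction J as [|J IHJ]; simpl; [apply filterlim_const|apply lim_plus; auto]. Qed.

Lemma csum_lim_of_geometric_bound (g : nat -> C) (K x : R) : (0 <= x < 1)%R ->
  (forall i, (Cmod (g i) <= K * x ^ i)%R) -> exists s, (fun n => csum g (S n)) --> s.
Proof.
  intros Hx Hg. apply (lim_of_geometric_increments _ (K * x) x Hx). intros n.
  replace (csum g (S (S n)) - csum g (S n)) with (g (S n)) by (simpl; ring).
  rewrite Rmult_assoc. apply Hg.
Qed.

Lemma tannery (f : nat -> nat -> C) (g : nat -> C) (s : C) (K x : R) : (0 <= x < 1)%R ->
  (forall n i, (i <= n)%nat -> (Cmod (f n i) <= K * x ^ i)%R) ->
  (forall i, (fun n => f n i) --> g i) ->
  (fun n => csum g (S n)) --> s ->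
  (fun n => csum (f n) (S n)) --> s.
Proof.
  intros Hx Hf Hfg Hs.
  assert (Hg : forall i, (Cmod (g i) <= K * x ^ i)%R).
  { intros i. replace (g i) with (g i - 0) by ring.
    apply (lim_Cmod_le (fun n => f (n + i)%nat i)).
    { apply (lim_reindex (fun n => f n i) _ (fun n => n + i)%nat 0); [lia|apply Hfg]. }
    intros n. replace (f (n + i)%nat i - 0) with (f (n + i)%nat i) by ring. apply Hf. lia. }
  assert (HK : (0 <= K)%R) by (specialize (Hg 0%nat); simpl in Hg; assert (H := Cmod_ge_0 (g 0%nat)); lra).
  apply filterlim_ext with (fun n => (csum (f n) (S n) - csum g (S n)) + csum g (S n)); [intros; ring|].
  replace s with (0 + s) by ring. apply lim_plus; [|exact Hs].
  apply lim_Cmod_iff. intros eps.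
  (* split off a head of [J] terms, which converges termwise, and a tail of size [<= 2 K x^J / (1 - x)] *)
  destruct (pow_lt_1_zero x ltac:(rewrite Rabs_pos_eq; lra) (eps * (1 - x) / (4 * (K + 1)))%R) as [J HJ].
  { apply Rdiv_lt_0_compat; [apply Rmult_lt_0_compat; [apply cond_pos|lra]|lra]. }
  specialize (HJ J (le_n _)). rewrite Rabs_pos_eq in HJ by (apply pow_le; lra).
  assert (Heps2 : (0 < eps / 2)%R) by (apply Rdiv_lt_0_compat; [apply cond_pos|lra]).
  destruct (proj1 (lim_Cmod_iff _ _) (lim_csum f g J Hfg) (mkposreal _ Heps2)) as [N HN].
  exists (N + J)%nat. intros n Hn. specialize (HN n ltac:(lia)); simpl in HN.
  set (tail := csum (fun i => f n (J + i)%nat - g (J + i)%nat) (S n - J)).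
  assert (Hsplit : csum (f n) (S n) - csum g (S n) - 0 = (csum (f n) J - csum g J) + tail).
  { unfold tail. rewrite csum_minus. replace (S n) with (J + (S n - J))%nat at 1 2 by lia.
    rewrite !csum_add. ring. }
  rewrite Hsplit. eapply Rle_lt_trans; [apply Cmod_triangle|].
  assert (Htail : (Cmod tail <= 2 * K * x ^ J / (1 - x))%R).
  { apply Cmod_csum_le_geometric; [lra|lra|]. intros i Hi. unfold Cminus.
    eapply Rle_trans; [apply Cmod_triangle|]. rewrite Cmod_opp.
    assert (H1 := Hf n (J + i)%nat ltac:(lia)). assert (H2 := Hg (J + i)%nat). lra. }
  assert (Hsmall : (2 * K * x ^ J / (1 - x) < eps / 2)%R).
  { apply (Rmult_lt_reg_r ((1 - x) / (2 * (K + 1)))); [apply Rdiv_lt_0_compat; lra|].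
    replace (2 * K * x ^ J / (1 - x) * ((1 - x) / (2 * (K + 1))))%R with (K / (K + 1) * x ^ J)%R by (field; lra).
    replace (eps / 2 * ((1 - x) / (2 * (K + 1))))%R with (eps * (1 - x) / (4 * (K + 1)))%R by (field; lra).
    assert (K / (K + 1) <= 1)%R
      by (apply (Rmult_le_reg_r (K + 1)); [lra|]; unfold Rdiv; rewrite Rmult_assoc, Rinv_l; lra).
    assert (0 <= x ^ J)%R by (apply pow_le; lra). nra. }
  destruct eps as [eps Heps]; simpl in *. lra.
Qed.

Lemma qpoch_S (a r : C) (n : nat) : qpoch a r (S n) = qpoch a r n * (1 - a * r ^ n).
Proof. reflexivity. Qed.

Lemma qpoch_shift (a r : C) (n : nat) : qpoch a r (S n) = (1 - a) * qpoch (a * r) r n.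
Proof. revert a. induction n as [|n IHn]; intros a; [simpl; ring|]. rewrite qpoch_S, IHn, qpoch_S. simpl. ring. Qed.

Lemma qpoch_add (a r : C) (m k : nat) : qpoch a r (m + k) = qpoch a r m * qpoch (a * r ^ m) r k.
Proof.
  induction k as [|k IHk]; [rewrite Nat.add_0_r; simpl; ring|].
  rewrite Nat.add_succ_r, !qpoch_S, IHk, Cpow_add_r. ring.
Qed.

Lemma qpoch_neq0 (a r : C) (n : nat) : (forall j, 1 - a * r ^ j <> 0) -> qpoch a r n <> 0.
Proof. intros H. induction n as [|n IHn]; [exact C1_nz|]. apply Cmult_neq_0; auto. Qed.

Lemma one_minus_neq0 (z : C) : (Cmod z < 1)%R -> 1 - z <> 0.
Proof.
  intros H E. replace z with (1 : C) in H.
  - rewrite Cmod_1 in H. lra.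
  - apply (f_equal (fun w => 1 - w)) in E. ring_simplify in E. symmetry. exact E.
Qed.

Lemma pow_le_one (x : R) (n : nat) : (0 <= x <= 1)%R -> (x ^ n <= 1)%R.
Proof. intros Hx. rewrite <- (pow1 n). apply pow_incr, Hx. Qed.

Lemma Rle_pow_le1 (x : R) (a b : nat) : (0 <= x <= 1)%R -> (b <= a)%nat -> (x ^ a <= x ^ b)%R.
Proof.
  intros Hx Hab. replace a with (b + (a - b))%nat by lia. rewrite pow_add.
  assert (0 <= x ^ b)%R by (apply pow_le; lra). assert (x ^ (a - b) <= 1)%R by (apply pow_le_one; lra).
  nra.
Qed.

Lemma exp_le_compat (x y : R) : (x <= y)%R -> (exp x <= exp y)%R.
Proof. intros [H|H]; [left; apply exp_increasing, H|subst; lra]. Qed.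

Lemma Cmod_qpoch_sub1_le_exp_sum (b r : C) (k : nat) : (Cmod r < 1)%R ->
  (Cmod (qpoch b r k - 1) <= exp (Cmod b * (1 - Cmod r ^ k) / (1 - Cmod r)) - 1)%R.
Proof.
  intros Hr. assert (Hr0 := Cmod_ge_0 r). assert (Hb0 := Cmod_ge_0 b).
  induction k as [|k IHk].
  - replace (qpoch b r 0 - 1) with (0 : C) by (simpl; ring).
    rewrite Cmod_0. simpl. replace (Cmod b * (1 - 1) / (1 - Cmod r))%R with 0%R by (field; lra). rewrite exp_0. lra.
  - set (s := (Cmod b * (1 - Cmod r ^ k) / (1 - Cmod r))%R) in IHk.
    set (t := (Cmod b * Cmod r ^ k)%R).
    assert (Ht : (0 <= t)%R) by (apply Rmult_le_pos; [lra|apply pow_le; lra]).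
    assert (Hst : (Cmod b * (1 - Cmod r ^ S k) / (1 - Cmod r) = s + t)%R) by (unfold s, t; simpl; field; lra).
    rewrite Hst, exp_plus, qpoch_S.
    replace (qpoch b r k * (1 - b * r ^ k) - 1) with ((qpoch b r k - 1) + - (qpoch b r k * (b * r ^ k))) by ring.
    eapply Rle_trans; [apply Cmod_triangle|]. rewrite Cmod_opp, !Cmod_mult, Cmod_pow. fold t.
    assert (HP : (Cmod (qpoch b r k) <= exp s)%R).
    { replace (qpoch b r k) with ((qpoch b r k - 1) + 1) by ring.
      eapply Rle_trans; [apply Cmod_triangle|]. rewrite Cmod_1. lra. }
    assert (Hexp := exp_ineq1_le t). assert (Hs := exp_pos s).
    assert (Cmod (qpoch b r k) * t <= exp s * t)%R by (apply Rmult_le_compat_r; lra).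
    nra.
Qed.

Lemma Cmod_qpoch_sub1_le (b r : C) (k : nat) : (Cmod r < 1)%R ->
  (Cmod (qpoch b r k - 1) <= exp (Cmod b / (1 - Cmod r)) - 1)%R.
Proof.
  intros Hr. eapply Rle_trans; [apply Cmod_qpoch_sub1_le_exp_sum, Hr|].
  apply Rplus_le_compat_r, exp_le_compat. unfold Rdiv. apply Rmult_le_compat_r.
  - apply Rlt_le, Rinv_0_lt_compat. lra.
  - assert (0 <= Cmod r ^ k)%R by (apply pow_le, Cmod_ge_0). assert (Hb := Cmod_ge_0 b). nra.
Qed.

Lemma Cmod_qpoch_le (a r : C) (n : nat) : (Cmod r < 1)%R -> (Cmod (qpoch a r n) <= exp (Cmod a / (1 - Cmod r)))%R.
Proof.
  intros Hr. replace (qpoch a r n) with ((qpoch a r n - 1) + 1) by ring.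
  eapply Rle_trans; [apply Cmod_triangle|]. rewrite Cmod_1. assert (H := Cmod_qpoch_sub1_le a r n Hr). lra.
Qed.

Lemma qpoch_cv (a r : C) : (Cmod r < 1)%R -> exists P, qpoch_inf_is a r P.
Proof.
  intros Hr. apply (lim_of_geometric_increments _ (exp (Cmod a / (1 - Cmod r)) * Cmod a) (Cmod r)).
  - split; [apply Cmod_ge_0|exact Hr].
  - intros n. rewrite qpoch_S.
    replace (qpoch a r n * (1 - a * r ^ n) - qpoch a r n) with (- (qpoch a r n * a * r ^ n)) by ring.
    rewrite Cmod_opp, !Cmod_mult, Cmod_pow, Rmult_assoc, (Rmult_assoc (exp _)).
    apply Rmult_le_compat_r; [apply Rmult_le_pos; [apply Cmod_ge_0|apply pow_le, Cmod_ge_0]|].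
    apply Cmod_qpoch_le, Hr.
Qed.

Lemma finite_lower_bound (f : nat -> R) (M : nat) :
  (forall n, (n <= M)%nat -> (0 < f n)%R) -> exists c, (0 < c)%R /\ forall n, (n <= M)%nat -> (c <= f n)%R.
Proof.
  induction M as [|M IHM]; intros Hf.
  - exists (f 0%nat). split; [apply Hf; lia|]. intros n Hn. replace n with 0%nat by lia. lra.
  - destruct IHM as [c [Hc HcM]]; [intros n Hn; apply Hf; lia|].
    exists (Rmin c (f (S M))). split; [apply Rmin_glb_lt; auto|].
    intros n Hn. destruct (Nat.eq_dec n (S M)) as [->|E]; [apply Rmin_r|].
    eapply Rle_trans; [apply Rmin_l|]. apply HcM. lia.
Qed.

Lemma qpoch_lower_bound (a r : C) : (Cmod r < 1)%R -> (forall j, 1 - a * r ^ j <> 0) ->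
  exists c, (0 < c)%R /\ forall n, (c <= Cmod (qpoch a r n))%R.
Proof.
  intros Hr Hnz. assert (Hr0 := Cmod_ge_0 r). assert (Ha0 := Cmod_ge_0 a).
  assert (Hl : (0 < ln (3 / 2))%R) by (rewrite <- ln_1; apply ln_increasing; lra).
  (* far enough, the factors are so close to 1 that every partial product of the tail has modulus >= 1/2 *)
  destruct (pow_lt_1_zero (Cmod r) ltac:(rewrite Rabs_pos_eq; lra) (ln (3 / 2) * (1 - Cmod r) / (Cmod a + 1))%R)
    as [N HN].
  { apply Rdiv_lt_0_compat; [apply Rmult_lt_0_compat|]; lra. }
  specialize (HN N (le_n _)). rewrite Rabs_pos_eq in HN by (apply pow_le; lra).
  assert (Htail : forall k, (1 / 2 <= Cmod (qpoch (a * r ^ N) r k))%R).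
  { intros k. assert (H := Cmod_qpoch_sub1_le (a * r ^ N) r k Hr).
    assert (Hs : (Cmod (a * r ^ N) / (1 - Cmod r) <= ln (3 / 2))%R).
    { rewrite Cmod_mult, Cmod_pow. apply (Rmult_le_reg_r (1 - Cmod r)); [lra|].
      unfold Rdiv. rewrite Rmult_assoc, Rinv_l, Rmult_1_r by lra.
      assert (0 <= Cmod r ^ N)%R by (apply pow_le; lra).
      apply (Rmult_lt_compat_l (Cmod a + 1)) in HN; [|lra].
      replace ((Cmod a + 1) * (ln (3 / 2) * (1 - Cmod r) / (Cmod a + 1)))%R
        with (ln (3 / 2) * (1 - Cmod r))%R in HN by (field; lra).
      nra. }
    apply exp_le_compat in Hs. rewrite exp_ln in Hs by lra.
    assert (Ht := Cmod_triangle (1 - qpoch (a * r ^ N) r k) (qpoch (a * r ^ N) r k)).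
    replace (1 - qpoch (a * r ^ N) r k + qpoch (a * r ^ N) r k) with (1 : C) in Ht by ring.
    rewrite Cmod_1, Cmod_sub_sym in Ht. lra. }
  destruct (finite_lower_bound (fun n => Cmod (qpoch a r n)) N) as [c [Hc HcN]].
  { intros n _. apply Cmod_gt_0, qpoch_neq0, Hnz. }
  exists (c / 2)%R. split; [lra|]. intros n.
  destruct (Compare_dec.le_lt_dec n N) as [Hn|Hn].
  - assert (H := HcN n Hn). simpl in H. lra.
  - replace n with (N + (n - N))%nat by lia. rewrite qpoch_add, Cmod_mult.
    assert (H1 := HcN N (le_n _)). assert (H2 := Htail (n - N)%nat). simpl in H1.
    apply Rle_trans with (c * (1 / 2))%R; [lra|]. apply Rmult_le_compat; lra.
Qed.

Lemma qpoch_inf_neq0 (a r P : C) : (Cmod r < 1)%R -> (forall j, 1 - a * r ^ j <> 0) ->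
  qpoch_inf_is a r P -> P <> 0.
Proof.
  intros Hr Hnz HP E. destruct (qpoch_lower_bound a r Hr Hnz) as [c [Hc Hlow]].
  assert (H := lim_Cmod_ge _ _ c HP Hlow). rewrite E, Cmod_0 in H. lra.
Qed.

Lemma qpoch_factor_neq0 (a r : C) (j : nat) : (Cmod a < 1)%R -> (Cmod r < 1)%R -> 1 - a * r ^ j <> 0.
Proof.
  intros Ha Hr. apply one_minus_neq0. rewrite Cmod_mult, Cmod_pow.
  assert (Cmod r ^ j <= 1)%R by (apply pow_le_one; split; [apply Cmod_ge_0|lra]).
  assert (Ha0 := Cmod_ge_0 a). nra.
Qed.

Lemma qpoch_neq0_of_Cmod_lt_1 (a r : C) (n : nat) : (Cmod a < 1)%R -> (Cmod r < 1)%R -> qpoch a r n <> 0.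
Proof. intros Ha Hr. apply qpoch_neq0. intros j. apply qpoch_factor_neq0; assumption. Qed.

Lemma Cmod_pow2_lt_1 (q : C) : (Cmod q < 1)%R -> (Cmod (q ^ 2) < 1)%R.
Proof. intros Hq. rewrite Cmod_pow. simpl. assert (H := Cmod_ge_0 q). nra. Qed.

Definition euler_partial (z r : C) (N : nat) : C := csum (fun m => z ^ m / qpoch r r m) (S N).

Section Euler.

Variable r : C.
Hypothesis Hr : (Cmod r < 1)%R.

Let rr_factor_neq0 (j : nat) : 1 - r * r ^ j <> 0.
Proof. apply qpoch_factor_neq0; exact Hr. Qed.

Let qpoch_rr_neq0 (m : nat) : qpoch r r m <> 0.
Proof. apply qpoch_neq0_of_Cmod_lt_1; exact Hr. Qed.

Lemma euler_partial_step (w : C) (N : nat) :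
  euler_partial w r (S N) - euler_partial (r * w) r (S N) = w * euler_partial w r N.
Proof.
  unfold euler_partial. rewrite (csum_shift _ (S N)), (csum_shift (fun m => (r * w) ^ m / _) (S N)).
  transitivity (csum (fun i => w ^ S i / qpoch r r (S i) - (r * w) ^ S i / qpoch r r (S i)) (S N)).
  { rewrite csum_minus. change (qpoch r r 0) with (RtoC 1). change (w ^ 0) with (RtoC 1).
    change ((r * w) ^ 0) with (RtoC 1). field. }
  rewrite <- csum_scal. apply csum_ext. intros i _.
  rewrite qpoch_S, Cpow_mult_l, !Cpow_S.
  assert (H1 := qpoch_rr_neq0 i). assert (H2 := rr_factor_neq0 i).
  field. auto.
Qed.

Lemma euler_partial_lim_shift (w E : C) :
  euler_partial w r --> E -> euler_partial (r * w) r --> (1 - w) * E.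
Proof.
  intros HE. apply lim_of_lim_S.
  apply filterlim_ext with (fun N => euler_partial w r (S N) - w * euler_partial w r N).
  { intros N. rewrite <- euler_partial_step. ring. }
  replace ((1 - w) * E) with (E - w * E) by ring.
  apply lim_minus; [apply (lim_reindex _ _ S 0); [lia|exact HE]|].
  apply lim_mult; [apply filterlim_const|exact HE].
Qed.

Section LowerBound.

Variable c : R.
Hypothesis Hc : (0 < c)%R.
Hypothesis Hlow : forall m, (c <= Cmod (qpoch r r m))%R.

Let Cmod_euler_term_le (w : C) (m : nat) : (Cmod (w ^ m / qpoch r r m) <= / c * Cmod w ^ m)%R.
Proof.
  rewrite Cmod_div, Cmod_pow by apply qpoch_rr_neq0. unfold Rdiv. rewrite Rmult_comm.
  apply Rmult_le_compat_r; [apply pow_le, Cmod_ge_0|]. apply Rinv_le_contravar; [exact Hc|apply Hlow].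
Qed.

Lemma euler_partial_cv (w : C) : (Cmod w < 1)%R -> exists E, euler_partial w r --> E.
Proof.
  intros Hw. apply (csum_lim_of_geometric_bound _ (/ c) (Cmod w)); [split; [apply Cmod_ge_0|exact Hw]|].
  apply Cmod_euler_term_le.
Qed.

Lemma Cmod_euler_partial_sub1_le (w : C) (N : nat) : (Cmod w < 1)%R ->
  (Cmod (euler_partial w r N - 1) <= / c * Cmod w / (1 - Cmod w))%R.
Proof.
  intros Hw. unfold euler_partial. rewrite csum_shift.
  replace (w ^ 0 / qpoch r r 0 + csum (fun i => w ^ S i / qpoch r r (S i)) N - 1)
    with (csum (fun i => w ^ S i / qpoch r r (S i)) N) by (simpl; field).
  replace (/ c * Cmod w)%R with (/ c * Cmod w ^ 1)%R by (simpl; ring).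
  apply Cmod_csum_le_geometric; [apply Rlt_le, Rinv_0_lt_compat, Hc|split; [apply Cmod_ge_0|exact Hw]|].
  intros i _. apply Cmod_euler_term_le.
Qed.

End LowerBound.

(* The sum E(w) of the series satisfies E(r w) = (1 - w) E(w), hence E(z r^K) = (z;r)_K E(z),
   while E(z r^K) -> 1 as K -> oo. *)
Theorem euler_identity (z P : C) : (Cmod z < 1)%R ->
  qpoch_inf_is z r P -> exists E, euler_partial z r --> E /\ E * P = 1.
Proof.
  intros Hz HP.
  destruct (qpoch_lower_bound r r Hr rr_factor_neq0) as [c [Hc Hlow]].
  destruct (euler_partial_cv c Hc Hlow z Hz) as [E HE]. exists E. split; [exact HE|].
  assert (HK : forall K, euler_partial (z * r ^ K) r --> qpoch z r K * E).
  { induction K as [|K IHK].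
    - replace (z * r ^ 0) with z by (simpl; ring). replace (qpoch z r 0 * E) with E by (simpl; ring). exact HE.
    - replace (z * r ^ S K) with (r * (z * r ^ K)) by (rewrite Cpow_S; ring).
      replace (qpoch z r (S K) * E) with ((1 - z * r ^ K) * (qpoch z r K * E)) by (rewrite qpoch_S; ring).
      apply euler_partial_lim_shift, IHK. }
  set (x := Cmod r). assert (Hx : (0 <= x < 1)%R) by (split; [apply Cmod_ge_0|exact Hr]).
  assert (Hw : forall K, (Cmod (z * r ^ K) <= x ^ K)%R /\ (Cmod (z * r ^ K) <= Cmod z)%R).
  { intros K. rewrite Cmod_mult, Cmod_pow. fold x.
    assert (0 <= x ^ K <= 1)%R by (split; [apply pow_le|apply pow_le_one]; lra).
    assert (Hz0 := Cmod_ge_0 z). split; nra. }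
  assert (Hbound : forall K, (Cmod (qpoch z r K * E - 1) <= (/ c / (1 - Cmod z)) * x ^ K)%R).
  { intros K. destruct (Hw K) as [Hw1 Hw2].
    eapply Rle_trans; [apply (lim_Cmod_le _ _ 1 _ (HK K)); intros N;
      apply (Cmod_euler_partial_sub1_le c Hc Hlow); lra|].
    unfold Rdiv. rewrite !Rmult_assoc. apply Rmult_le_compat_l; [apply Rlt_le, Rinv_0_lt_compat, Hc|].
    rewrite (Rmult_comm (/ (1 - Cmod z))).
    apply Rmult_le_compat; [apply Cmod_ge_0|apply Rlt_le, Rinv_0_lt_compat; lra|exact Hw1|].
    apply Rinv_le_contravar; lra. }
  apply (lim_unique (fun K => qpoch z r K * E)).
  - rewrite Cmult_comm. apply lim_mult; [exact HP|apply filterlim_const].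
  - exact (lim_geometric _ _ _ x Hx Hbound).
Qed.

End Euler.

Lemma alpha_S (q : C) (N : nat) : (Cmod q < 1)%R ->
  alpha q (S N) = q * qpoch (q ^ 2) (q ^ 2) N * euler_partial q (q ^ 2) N.
Proof.
  intros Hq. assert (Hq2 := Cmod_pow2_lt_1 q Hq).
  induction N as [|N IHN]; [unfold euler_partial; simpl; field|].
  change (alpha q (S (S N))) with (q ^ S (S N) + (1 - q ^ (2 * S N)) * alpha q (S N)).
  rewrite IHN. unfold euler_partial.
  change (csum ?f (S (S N))) with (csum f (S N) + f (S N)).
  assert (H1 : qpoch (q ^ 2) (q ^ 2) N <> 0) by (apply qpoch_neq0_of_Cmod_lt_1; exact Hq2).
  assert (H2 := qpoch_factor_neq0 (q ^ 2) (q ^ 2) N Hq2 Hq2).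
  cbv beta. rewrite qpoch_S, (Cpow_mult_r q 2 (S N)), (Cpow_S (q ^ 2) N), (Cpow_S q (S N)).
  set (r := q ^ 2) in *. set (t := r ^ N) in *.
  field. auto.
Qed.

Fixpoint tri (k : nat) : nat := match k with O => O | S k' => (tri k' + k')%nat end.

Lemma tri_double (k : nat) : (2 * tri k + k = k * k)%nat.
Proof. induction k as [|k IHk]; simpl tri; nia. Qed.

Lemma le_tri_S (i : nat) : (i <= tri (S i))%nat.
Proof. simpl. lia. Qed.

Lemma tri_exponent_low (n i : nat) : (i <= n)%nat -> (tri (n - i) + tri (S n) = n * (n - i) + tri (S i))%nat.
Proof.
  intros Hi. assert (H1 := tri_double (n - i)). assert (H2 := tri_double (S n)). assert (H3 := tri_double (S i)).
  replace n with (i + (n - i))%nat in * by lia. set (m := (n - i)%nat) in *. clearbody m.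
  replace (i + m - i)%nat with m in * by lia. nia.
Qed.

Lemma tri_exponent_high (n i : nat) : (tri (S n + i) + tri (S n) = n * (S n + i) + tri (S i))%nat.
Proof.
  assert (H1 := tri_double (S n + i)). assert (H2 := tri_double (S n)). assert (H3 := tri_double (S i)). nia.
Qed.

Lemma div_mul_succ_2 (n : nat) : Nat.div (n * (n + 1)) 2 = tri (S n).
Proof.
  replace (n * (n + 1))%nat with (tri (S n) * 2)%nat by (assert (H := tri_double (S n)); nia).
  apply Nat.div_mul. lia.
Qed.

Fixpoint qbinom (q : C) (N k : nat) : C :=
  match N, k with
  | _, O => 1
  | O, S _ => 0
  | S N', S k' => qbinom q N' k' + q ^ S k' * qbinom q N' (S k')
  end.

Lemma qbinom_0 (q : C) (N : nat) : qbinom q N 0 = 1.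
Proof. destruct N; reflexivity. Qed.

Lemma qbinom_gt (q : C) (N k : nat) : (N < k)%nat -> qbinom q N k = 0.
Proof.
  revert k. induction N as [|N IHN]; intros [|k] Hk; try lia; [reflexivity|].
  simpl. rewrite !IHN by lia. ring.
Qed.

Theorem qpoch_qbinom_expansion (q x : C) (N : nat) :
  qpoch x q N = csum (fun k => qbinom q N k * (- x) ^ k * q ^ tri k) (S N).
Proof.
  revert x. induction N as [|N IHN]; intros x; [simpl; ring|].
  set (h := fun k => qbinom q N k * (- (x * q)) ^ k * q ^ tri k).
  rewrite qpoch_shift, IHN. fold h. rewrite (csum_shift _ (S N)).
  rewrite (csum_ext (fun i => qbinom q (S N) (S i) * (- x) ^ S i * q ^ tri (S i)) (fun i => - x * h i + h (S i))).
  2: { intros i _. unfold h. simpl qbinom. simpl tri.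
       replace (- (x * q)) with (- x * q) by ring. rewrite !Cpow_mult_l, Cpow_add_r, (Cpow_S (- x) i), (Cpow_S q i).
       ring. }
  rewrite csum_plus, csum_scal.
  assert (Hlast : h (S N) = 0) by (unfold h; rewrite qbinom_gt by lia; ring).
  assert (Hshift := csum_shift h (S N)). change (csum h (S (S N))) with (csum h (S N) + h (S N)) in Hshift.
  rewrite Hlast, Cplus_0_r in Hshift.
  replace (csum (fun i => h (S i)) (S N)) with (csum h (S N) - h 0%nat) by (rewrite Hshift; ring).
  assert (Hfirst : h 0%nat = 1) by (unfold h; rewrite qbinom_0; simpl; ring).
  rewrite Hfirst, qbinom_0. simpl (tri 0). ring.
Qed.

Lemma qbinom_mul_qpoch (q : C) (N a b : nat) :
  (a + b = N)%nat -> qbinom q N a * qpoch q q a * qpoch q q b = qpoch q q N.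
Proof.
  revert a b. induction N as [|N IHN]; intros a b Hab.
  - replace a with 0%nat by lia. replace b with 0%nat by lia. simpl. ring.
  - destruct a as [|a]; [simpl in Hab; subst b; simpl qbinom; simpl qpoch at 1; ring|].
    destruct b as [|b].
    + replace a with N by lia. simpl qbinom. rewrite (qbinom_gt q N (S N)) by lia.
      assert (IH := IHN N 0%nat ltac:(lia)). rewrite qpoch_S. simpl qpoch in IH |- *.
      transitivity ((qbinom q N N * qpoch q q N * 1) * (1 - q * q ^ N)); [ring|]. rewrite IH. ring.
    + assert (IH1 := IHN a (S b) ltac:(lia)). assert (IH2 := IHN (S a) b ltac:(lia)).
      transitivity ((qbinom q N a * qpoch q q a * qpoch q q (S b)) * (1 - q * q ^ a) +
                    q ^ S a * (qbinom q N (S a) * qpoch q q (S a) * qpoch q q b) * (1 - q * q ^ b)).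
      { simpl qbinom. rewrite (qpoch_S q q a), (qpoch_S q q b), (Cpow_S q a). ring. }
      rewrite IH1, IH2, qpoch_S. replace N with (a + S b)%nat by lia. rewrite Cpow_add_r, !Cpow_S. ring.
Qed.

Lemma qpoch_mul_opp (a r : C) (n : nat) : qpoch a r n * qpoch (- a) r n = qpoch (a ^ 2) (r ^ 2) n.
Proof.
  induction n as [|n IHn]; [simpl; ring|]. rewrite !qpoch_S, <- IHn.
  replace ((r ^ 2) ^ n) with (r ^ n * r ^ n) by (rewrite <- Cpow_mult_r, <- Cpow_add_r; f_equal; lia).
  simpl. ring.
Qed.

Lemma qpoch_double (a r : C) (n : nat) : qpoch a r (2 * n) = qpoch a (r ^ 2) n * qpoch (a * r) (r ^ 2) n.
Proof.
  induction n as [|n IHn]; [simpl; ring|].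
  replace (2 * S n)%nat with (S (S (2 * n))) by lia.
  rewrite !qpoch_S, IHn, <- Cpow_mult_r, (Cpow_S r (2 * n)). ring.
Qed.

Section Gauss.

Variable q : C.
Hypothesis Hq0 : q <> 0.
Hypothesis Hq1 : (Cmod q < 1)%R.

Let qq_neq0 (n : nat) : qpoch q q n <> 0.
Proof. apply qpoch_neq0_of_Cmod_lt_1; exact Hq1. Qed.

Lemma qbinom_ratio (N a b : nat) : (a + b = N)%nat -> qbinom q N a = qpoch q q N / (qpoch q q a * qpoch q q b).
Proof. intros Hab. rewrite <- (qbinom_mul_qpoch q N a b Hab). field. auto. Qed.

(* (-q^-n; q)_(2n+1) = prod_(m=-n..n) (1 + q^m) = 2 q^-(n(n+1)/2) (-q; q)_n^2 *)
Lemma qpoch_centered (n : nat) : q ^ tri (S n) * qpoch (- / q ^ n) q (2 * n + 1) = 2 * qpoch (- q) q n ^ 2.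
Proof.
  induction n as [|n IHn]; [simpl; field|].
  assert (Hqn : q ^ n <> 0) by (apply Cpow_nz, Hq0).
  change (tri (S (S n))) with (tri (S n) + S n)%nat.
  replace (2 * S n + 1)%nat with (S (S (2 * n + 1))) by lia.
  rewrite Cpow_add_r, qpoch_shift, qpoch_S.
  replace (- / q ^ S n * q) with (- / q ^ n) by (rewrite Cpow_S; field; auto).
  rewrite qpoch_S.
  replace (q ^ (2 * n + 1)) with (q * q ^ n * q ^ n)
    by (replace (2 * n + 1)%nat with (n + n + 1)%nat by lia; rewrite !Cpow_add_r; simpl; ring).
  transitivity ((q ^ tri (S n) * qpoch (- / q ^ n) q (2 * n + 1)) * (1 + q * q ^ n) ^ 2).
  { rewrite Cpow_S. field. auto. }
  rewrite IHn. ring.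
Qed.

(* Pairing the terms k = n - i and k = n + 1 + i of Rothe's expansion of (-q^-n; q)_(2n+1). *)
Lemma gauss_finite_identity (n : nat) :
  csum (fun i => q ^ tri (S i) * qbinom q (2 * n + 1) (n - i)) (S n) = qpoch (- q) q n ^ 2.
Proof.
  assert (Htwo : (2 : C) <> 0) by (intro E; apply (f_equal Re) in E; simpl in E; lra).
  transitivity (/ 2 * (2 * qpoch (- q) q n ^ 2)); [|field; exact Htwo].
  rewrite <- qpoch_centered, qpoch_qbinom_expansion, <- !csum_scal.
  replace (S (2 * n + 1)) with (S n + S n)%nat by lia.
  symmetry. rewrite csum_add, (csum_rev _ (S n)), <- csum_plus. apply csum_ext. intros i Hi.
  replace (- - / q ^ n) with (/ q ^ n) by ring. replace (S n - 1 - i)%nat with (n - i)%nat by lia.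
  rewrite (qbinom_ratio (2 * n + 1) (S n + i) (n - i)), (qbinom_ratio (2 * n + 1) (n - i) (S n + i)) by lia.
  assert (Hexp : forall k e, (tri k + tri (S n) = n * k + e)%nat ->
                             q ^ tri (S n) * ((/ q ^ n) ^ k * q ^ tri k) = q ^ e).
  { intros k e He. rewrite Cpow_inv, <- Cpow_mult_r by (apply Cpow_nz, Hq0).
    assert (Hnk : q ^ (n * k) <> 0) by (apply Cpow_nz, Hq0).
    transitivity (q ^ (tri k + tri (S n)) / q ^ (n * k)); [rewrite Cpow_add_r; field; exact Hnk|].
    rewrite He, Cpow_add_r. field. exact Hnk. }
  assert (E1 := Hexp (n - i)%nat (tri (S i)) (tri_exponent_low n i ltac:(lia))).
  assert (E2 := Hexp (S n + i)%nat (tri (S i)) (tri_exponent_high n i)).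
  transitivity (qpoch q q (2 * n + 1) / (qpoch q q (n - i) * qpoch q q (S n + i)) * / 2 *
    (q ^ tri (S n) * ((/ q ^ n) ^ (n - i) * q ^ tri (n - i)) +
     q ^ tri (S n) * ((/ q ^ n) ^ (S n + i) * q ^ tri (S n + i)))).
  { field. auto. }
  rewrite E1, E2. field. auto.
Qed.

Let weight (n i : nat) : C := qpoch q q n * qpoch q q (S n) / (qpoch q q (n - i) * qpoch q q (S n + i)).

Let Hq2 : (Cmod (q ^ 2) < 1)%R := Cmod_pow2_lt_1 q Hq1.

Lemma gauss_partial_identity (n : nat) :
  qpoch q q n * qpoch q (q ^ 2) n * (1 - q * q ^ (2 * n)) * csum (fun i => q ^ tri (S i) * weight n i) (S n)
  = qpoch (q ^ 2) (q ^ 2) n * qpoch q q (S n).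
Proof.
  assert (Hodd : qpoch q (q ^ 2) n <> 0) by (apply qpoch_neq0_of_Cmod_lt_1; [exact Hq1|exact Hq2]).
  assert (Heven : qpoch (q ^ 2) (q ^ 2) n <> 0) by (apply qpoch_neq0_of_Cmod_lt_1; exact Hq2).
  assert (Hlast : 1 - q * q ^ (2 * n) <> 0) by (apply qpoch_factor_neq0; exact Hq1).
  assert (Hqq : qpoch q q (2 * n + 1) = qpoch q (q ^ 2) n * qpoch (q ^ 2) (q ^ 2) n * (1 - q * q ^ (2 * n))).
  { replace (2 * n + 1)%nat with (S (2 * n)) by lia. rewrite qpoch_S, qpoch_double.
    replace (q * q) with (q ^ 2) by ring. reflexivity. }
  rewrite (csum_ext _ (fun i => qpoch q q n * qpoch q q (S n) / qpoch q q (2 * n + 1) *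
                                   (q ^ tri (S i) * qbinom q (2 * n + 1) (n - i)))).
  2: { intros i Hi. unfold weight. rewrite (qbinom_ratio (2 * n + 1) (n - i) (S n + i)) by lia.
       rewrite Hqq. field. repeat split; auto. }
  rewrite csum_scal, gauss_finite_identity, Hqq, <- (qpoch_mul_opp q q n).
  field. repeat split; auto.
  intro E. apply Heven. rewrite <- (qpoch_mul_opp q q n), E. ring.
Qed.

Lemma gauss_weight_lim (Q : C) (i : nat) : Q <> 0 -> qpoch_inf_is q q Q -> (fun n => weight n i) --> 1.
Proof.
  intros HQ0 HQ. unfold weight.
  replace (RtoC 1) with (Q * Q * / (Q * Q)) by (field; exact HQ0).
  apply lim_mult.
  - apply lim_mult; [exact HQ|apply (lim_reindex _ _ S 0); [intros; lia|exact HQ]].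
  - apply lim_inv; [apply Cmult_neq_0; exact HQ0|]. apply lim_mult.
    + apply (lim_reindex _ _ (fun n => n - i)%nat i); [intros; lia|exact HQ].
    + apply (lim_reindex _ _ (fun n => S n + i)%nat 0); [intros; lia|exact HQ].
Qed.

Lemma Cmod_gauss_weight_le (c : R) (n i : nat) : (0 < c)%R -> (forall m, (c <= Cmod (qpoch q q m))%R) ->
  (Cmod (weight n i) <= (exp (Cmod q / (1 - Cmod q)) / c) ^ 2)%R.
Proof.
  intros Hc Hlow. unfold weight. set (B := exp (Cmod q / (1 - Cmod q))).
  assert (HB : forall m, (Cmod (qpoch q q m) <= B)%R) by (intros m; apply Cmod_qpoch_le, Hq1).
  rewrite Cmod_div, !Cmod_mult by (apply Cmult_neq_0; auto).
  assert (H0 : forall m, (0 <= Cmod (qpoch q q m))%R) by (intros; apply Cmod_ge_0).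
  replace ((B / c) ^ 2)%R with (B * B * / (c * c))%R by (field; lra).
  assert (Hd : forall m, (0 < Cmod (qpoch q q m))%R) by (intros m; apply (Rlt_le_trans _ c); auto).
  apply Rmult_le_compat.
  - apply Rmult_le_pos; auto.
  - apply Rlt_le, Rinv_0_lt_compat, Rmult_lt_0_compat; auto.
  - apply Rmult_le_compat; auto.
  - apply Rinv_le_contravar; [apply Rmult_lt_0_compat; lra|apply Rmult_le_compat; auto; lra].
Qed.

Theorem gauss_identity (P1 P2 : C) :
  qpoch_inf_is (q ^ 2) (q ^ 2) P1 -> qpoch_inf_is q (q ^ 2) P2 ->
  exists s, (fun n => csum (fun i => q ^ tri (S i)) (S n)) --> s /\ s * P2 = P1.
Proof.
  intros HP1 HP2. set (x := Cmod q). assert (Hx : (0 <= x < 1)%R) by (split; [apply Cmod_ge_0|exact Hq1]).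
  destruct (qpoch_cv q q Hq1) as [Q HQ].
  assert (HQ0 : Q <> 0) by (apply (qpoch_inf_neq0 q q); auto; intros j; apply qpoch_factor_neq0; exact Hq1).
  destruct (qpoch_lower_bound q q Hq1 (fun j => qpoch_factor_neq0 q q j Hq1 Hq1)) as [c [Hc Hlow]].
  assert (Hterm : forall i, (Cmod (q ^ tri (S i)) <= 1 * x ^ i)%R).
  { intros i. rewrite Cmod_pow, Rmult_1_l. apply Rle_pow_le1; [lra|apply le_tri_S]. }
  destruct (csum_lim_of_geometric_bound _ 1 x Hx Hterm) as [s Hs].
  exists s. split; [exact Hs|].
  assert (Hsum : (fun n => csum (fun i => q ^ tri (S i) * weight n i) (S n)) --> s).
  { apply (tannery (fun n i => q ^ tri (S i) * weight n i) (fun i => q ^ tri (S i)) s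
                   ((exp (x / (1 - x)) / c) ^ 2) x Hx).
    - intros n i _. rewrite Cmod_mult, Rmult_comm. apply Rmult_le_compat; try apply Cmod_ge_0.
      + apply Cmod_gauss_weight_le; assumption.
      + rewrite <- (Rmult_1_l (x ^ i)). apply Hterm.
    - intros i. assert (H := lim_mult _ _ _ _ (filterlim_const (q ^ tri (S i))) (gauss_weight_lim Q i HQ0 HQ)).
      rewrite Cmult_1_r in H. exact H.
    - exact Hs. }
  assert (Hfactor : (fun n => 1 - q * q ^ (2 * n)) --> 1).
  { apply (lim_geometric _ _ 1 x Hx). intros n.
    replace (1 - q * q ^ (2 * n) - 1) with (- q ^ (S (2 * n))) by (rewrite Cpow_S; ring).
    rewrite Cmod_opp, Cmod_pow, Rmult_1_l. apply Rle_pow_le1; [lra|lia]. }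
  assert (Hlhs := lim_mult _ _ _ _ (lim_mult _ _ _ _ (lim_mult _ _ _ _ HQ HP2) Hfactor) Hsum).
  assert (Hrhs := lim_mult _ _ _ _ HP1 (lim_reindex _ _ S 0 ltac:(intros; lia) HQ)).
  assert (E : Q * P2 * 1 * s = P1 * Q).
  { apply (lim_unique _ _ _ Hlhs). eapply filterlim_ext; [|exact Hrhs].
    intros n. symmetry. apply gauss_partial_identity. }
  replace (s * P2) with (Q * P2 * 1 * s / Q) by (field; exact HQ0).
  rewrite E. field. exact HQ0.
Qed.

End Gauss.

Theorem corollary4p2 (q : C) (hq0 : (0 < Cmod q)%R) (hq1 : (Cmod q < 1)%R) :
  exists L P1 P2 S : C,
    filterlim (alpha q) eventually (locally L) /\
    qpoch_inf_is (q ^ 2) (q ^ 2) P1 /\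
    qpoch_inf_is q (q ^ 2) P2 /\
    P2 <> 0 /\
    is_series (fun n : nat => q ^ (Nat.div (n * (n + 1)) 2)) S /\
    / q * L = P1 / P2 /\
    P1 / P2 = S.
Proof.
  assert (Hq0 : q <> 0) by (intro E; rewrite E, Cmod_0 in hq0; lra).
  assert (Hq2 := Cmod_pow2_lt_1 q hq1).
  destruct (qpoch_cv (q ^ 2) (q ^ 2) Hq2) as [P1 HP1].
  destruct (qpoch_cv q (q ^ 2) Hq2) as [P2 HP2].
  assert (HP20 : P2 <> 0).
  { apply (qpoch_inf_neq0 q (q ^ 2) P2 Hq2); [intros j; apply qpoch_factor_neq0; assumption|exact HP2]. }
  destruct (euler_identity (q ^ 2) Hq2 q P2 hq1 HP2) as [E [HE HEP]].
  destruct (gauss_identity q Hq0 hq1 P1 P2 HP1 HP2) as [s [Hs HsP]].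
  exists (q * P1 * E), P1, P2, s. repeat split; auto.
  - apply lim_of_lim_S. apply filterlim_ext with (fun N => q * qpoch (q ^ 2) (q ^ 2) N * euler_partial q (q ^ 2) N).
    { intros N. symmetry. apply alpha_S, hq1. }
    apply lim_mult; [apply lim_mult; [apply filterlim_const|exact HP1]|exact HE].
  - eapply filterlim_ext; [|exact Hs]. intros n.
    rewrite sum_n_csum. apply csum_ext. intros i _. rewrite div_mul_succ_2. reflexivity.
  - rewrite <- (Cmult_1_r (P1 / P2)), <- HEP. field. auto.
  - rewrite <- HsP. field. exact HP20.
Qed.
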